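(* Let $\Omega\subseteq\mathbb R^d$ be a nonempty open set, $A\in\mathcal A(\Omega)$, $b,c\in L^\infty(\Omega;\mathbb C^d)$, $V\in L^1_{\rm loc}(\Omega)$ nonnegative. Let $1<r<p<\infty$ and $q=p/(p-1)$. Then: (i) $(A,b,c,V)\in\mathcal S_p(\Omega)$ if and only if $(A^*,c,b,V)\in\mathcal S_q(\Omega)$, where $A^*$ is the pointwise conjugate transpose. (ii) $\mathcal S_r(\Omega)\cap\mathcal S_p(\Omega)\subseteq\mathcal S_s(\Omega)$ for all $s\in[r,p]$. In particular, $\{\mathcal B_p(\Omega):p\in[2,\infty)\}$ is a decreasing chain, i.e. $\mathcal B_{p'}(\Omega)\subseteq\mathcal B_p(\Omega)$ whenever $2\le p\le p'<\infty$.
   Context: $\langle \xi,\sigma\rangle=\sum_j\xi_j\overline{\sigma_j}$. $\mathcal{A}(\Omega)$: measurable $A:\Omega\to\mathbb{C}^{d\times d}$ with $\lambda,\Lambda>0$ such that $\Re\langle A(x)\xi,\xi\rangle\ge\lambda|\xi|^2$, $|\langle A(x)\xi,\sigma\rangle|\le\Lambda|\xi||\sigma|$ a.e. $\mathcal{J}_s\xi=\frac s2(\xi+(1-\frac2s)\overline\xi)$. $\Delta_s(A)=\operatorname{ess\,inf}_{x}\min_{|\xi|=1}\Re\langle A(x)\xi,\xi+|1-2/s|\overline\xi\rangle$, $\mathcal A_s(\Omega)=\{A\in\mathcal A(\Omega):\Delta_s(A)>0\}$. $\Gamma_s^{(A,b,c,V)}(x,\xi)=\Re\langle A(x)\xi,\mathcal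 J_s\xi\rangle+\Re\langle b(x)+\mathcal J_sc(x),\xi\rangle+V(x)$. $\mathcal S_s(\Omega)$: quadruples $(A,b,c,V)$ ($A\in\mathcal A(\Omega)$, $b,c\in L^\infty(\Omega;\mathbb C^d)$, $0\le V\in L^1_{\rm loc}$) with $A\in\mathcal A_s(\Omega)$, $|b-c|\le M\sqrt V$ a.e. for some $M>0$, and $\Gamma_s(x,\xi)\ge\mu(|\xi|^2+V(x))$ for a.e. $x$, all $\xi$, for some $\mu>0$. $\mathcal B_p(\Omega)=\mathcal S_p(\Omega)\cap\mathcal S_{p/(p-1)}(\Omega)$. *)

From HB Require Import structures.
From mathcomp Require Import all_boot all_order all_algebra.
From mathcomp Require Import all_classical all_reals all_analysis.
From mathcomp Require Import complex.
Set Implicit Arguments. Unset Strict Implicit. Unset Printing Implicit Defensive.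
Import Order.TTheory GRing.Theory Num.Theory.
Import numFieldNormedType.Exports.
Local Open Scope classical_set_scope.
Local Open Scope ring_scope.

Section Defs.
Variables (R : realType) (d : nat).
Local Notation C := (R[i]).
Local Notation Pt := ('rV[R]_d).

Definition box (a b : Pt) : set Pt :=
  [set x | forall i : 'I_d, a 0 i <= x 0 i <= b 0 i].
Definition box_vol (a b : Pt) : R := \prod_(i < d) (b 0 i - a 0 i).

Definition leb_outer (E : set Pt) : \bar R :=
  ereal_inf [set s : \bar R | exists (a b : nat -> Pt),
    [/\ (forall k (i : 'I_d), a k 0 i <= b k 0 i),
        E `<=` \bigcup_k box (a k) (b k) &
        s = (\sum_(0 <= k <oo) (box_vol (a k) (b k))%:E)%E]].

Definition leb_measurable (E : set Pt) : Prop :=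
  forall T : set Pt, leb_outer T = (leb_outer (T `&` E) + leb_outer (T `\` E))%E.

Definition ae_on (Omega : set Pt) (P : Pt -> Prop) : Prop :=
  leb_outer [set x | Omega x /\ ~ P x] = 0%E.

Definition meas_on (Omega : set Pt) (f : Pt -> R) : Prop :=
  forall t : R, leb_measurable (Omega `&` [set x | t < f x]).
Definition cmeas_on (Omega : set Pt) (f : Pt -> C) : Prop :=
  meas_on Omega (fun x => complex.Re (f x)) /\ meas_on Omega (fun x => complex.Im (f x)).

(* Lebesgue integral over K of a nonnegative function (layer-cake formula) *)
Definition nnintegral (K : set Pt) (V : Pt -> R) : \bar R :=
  (\int[@lebesgue_measure R]_(t in `[0%R, +oo[%classic)
      leb_outer (K `&` [set x | (t < V x)%R]))%E.

Definition cip (xi sigma : 'cV[C]_d) : C :=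
  \sum_(j < d) xi j 0 * conjc (sigma j 0).
Definition cnorm (xi : 'cV[C]_d) : R :=
  Num.sqrt (\sum_(j < d) (Normc.normc (xi j 0)) ^+ 2).
Definition cconj (xi : 'cV[C]_d) : 'cV[C]_d := map_mx conjc xi.
Definition adjoint (M : 'M[C]_d) : 'M[C]_d := map_mx conjc (M^T).

Definition Js (s : R) (xi : 'cV[C]_d) : 'cV[C]_d :=
  ((s / 2)%:C)%C *: (xi + ((1 - 2 / s)%:C)%C *: cconj xi).

Definition ellA (Omega : set Pt) (A : Pt -> 'M[C]_d) : Prop :=
  (forall i j, cmeas_on Omega (fun x => A x i j)) /\
  exists lam Lam : R, [/\ 0 < lam, 0 < Lam &
    ae_on Omega (fun x => forall xi sigma : 'cV[C]_d,
      lam * cnorm xi ^+ 2 <= complex.Re (cip (A x *m xi) xi) /\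
      Normc.normc (cip (A x *m xi) sigma) <= Lam * cnorm xi * cnorm sigma)].

Definition Linf (Omega : set Pt) (b : Pt -> 'cV[C]_d) : Prop :=
  (forall j, cmeas_on Omega (fun x => b x j 0)) /\
  exists M : R, ae_on Omega (fun x => cnorm (b x) <= M).

Definition L1loc_nonneg (Omega : set Pt) (V : Pt -> R) : Prop :=
  (forall x, Omega x -> 0 <= V x) /\ meas_on Omega V /\
  forall K : set Pt, compact K -> K `<=` Omega -> (nnintegral K V < +oo)%E.

Definition ess_inf_on (Omega : set Pt) (g : Pt -> \bar R) : \bar R :=
  ereal_sup [set (delta%:E)%E | delta in [set delta : R |
                 ae_on Omega (fun x => (delta%:E <= g x)%E)]].

Definition Delta (s : R) (Omega : set Pt) (A : Pt -> 'M[C]_d) : \bar R :=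
  ess_inf_on Omega (fun x => ereal_inf
    [set ((complex.Re (cip (A x *m xi) (xi + (`|1 - 2 / s|)%:C%C *: cconj xi)))%:E)%E
       | xi in [set xi : 'cV[C]_d | cnorm xi = 1]]).

Definition ellA_s (s : R) (Omega : set Pt) (A : Pt -> 'M[C]_d) : Prop :=
  ellA Omega A /\ (0 < Delta s Omega A)%E.

Definition Gamma (s : R) (A : Pt -> 'M[C]_d) (b c : Pt -> 'cV[C]_d)
    (V : Pt -> R) (x : Pt) (xi : 'cV[C]_d) : R :=
  complex.Re (cip (A x *m xi) (Js s xi)) + complex.Re (cip (b x + Js s (c x)) xi) + V x.

Definition quad := ((Pt -> 'M[C]_d) * (Pt -> 'cV[C]_d) * (Pt -> 'cV[C]_d)
                    * (Pt -> R))%type.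

Definition S_class (s : R) (Omega : set Pt) : set quad :=
  [set Q | let: (A, b, c, V) := Q in
    [/\ (ellA Omega A /\ Linf Omega b /\ Linf Omega c /\ L1loc_nonneg Omega V),
        ellA_s s Omega A,
        exists M : R, 0 < M /\
          ae_on Omega (fun x => cnorm (b x - c x) <= M * Num.sqrt (V x)) &
        exists mu : R, 0 < mu /\
          ae_on Omega (fun x => forall xi : 'cV[C]_d,
            mu * (cnorm xi ^+ 2 + V x) <= Gamma s A b c V x xi)]].

Definition B_class (p : R) (Omega : set Pt) : set quad :=
  S_class p Omega `&` S_class (p / (p - 1)) Omega.

End Defs.

From HB Require Import structures.
From mathcomp Require Import all_boot all_order all_algebra.
From mathcomp Require Import all_classical all_reals all_analysis.
From mathcomp Require Import complex.
From mathcomp.algebra_tactics Require Import ring.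
Import Order.TTheory GRing.Theory Num.Theory.
Import numFieldNormedType.Exports.
Local Open Scope classical_set_scope.
Local Open Scope ring_scope.
Set Implicit Arguments. Unset Strict Implicit. Unset Printing Implicit Defensive.

(* Write [xi = x + i y].  Then [J_s xi = (s - 1) x + i y], so [Re <w, J_s xi>] is
   affine in [s], and so is [Gamma_s(x, xi)]: a lower bound holding at [s = r] and
   at [s = p] persists on [[r, p]].  When [(p - 1) (q - 1) = 1] the maps [J_p] and
   [J_q] are mutually inverse, whence
   [Gamma_p^(A,b,c,V)(x, J_q xi) = Gamma_q^(A^*,c,b,V)(x, xi)], while [|J_q xi|] is
   comparable to [|xi|]; this is the duality.  Positivity of [Delta_s] is the same
   as coercivity of [Re <A xi, J_s xi>], after rotating [xi] to [i xi] when [s < 2].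
   The almost-everywhere bookkeeping needs [leb_outer] to be an outer measure: it is
   the outer measure generated by the volume of boxes. *)

Section leb_outer.
Variables (R : realType) (d : nat).
Local Notation Pt := 'rV[R]_d.
Local Open Scope ereal_scope.
Implicit Types (E F : set Pt) (a b : Pt).

Definition box_le a b := forall i : 'I_d, (a 0 i <= b 0 i)%R.

Lemma box_vol_ge0 a b : box_le a b -> (0 <= box_vol a b)%R.
Proof. by move=> ab; apply: prodr_ge0 => i _; rewrite subr_ge0. Qed.

Lemma leb_outer_ge0 E : 0 <= leb_outer E.
Proof.
apply: le_ereal_inf_tmp => _ [a [b [ab _ ->]]].
by apply: nneseries_ge0 => k _; rewrite lee_fin box_vol_ge0.
Qed.

Lemma leb_outer_mono : {homo @leb_outer R d : E F / E `<=` F >-> E <= F}.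
Proof.
move=> E F EF; apply: ereal_inf_le_tmp => _ [a [b [ab Fab ->]]].
by exists a, b; split => //; apply: subset_trans EF Fab.
Qed.

(* For [d = 0] every box has volume [1], the empty product. *)
Lemma leb_outer_dim0 E : d = 0%N -> 1 <= leb_outer E.
Proof.
move=> d0; apply: le_ereal_inf_tmp => _ [a [b [ab _ ->]]].
apply: le_trans (nneseries_lim_ge 1 _) => [|k _ _]; last by rewrite lee_fin box_vol_ge0.
by rewrite big_nat1 /box_vol big1 //; case=> i i_lt; exfalso; rewrite d0 in i_lt.
Qed.

Lemma ae_on_mono (Om : set Pt) (P Q : Pt -> Prop) :
  (forall x, Om x -> P x -> Q x) -> ae_on Om P -> ae_on Om Q.
Proof.
move=> PQ aeP; apply/eqP; rewrite eq_le leb_outer_ge0 andbT -aeP.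
by apply: leb_outer_mono => x [Ox nQx]; split => // Px; apply/nQx/PQ.
Qed.

Lemma ae_on_dim_gt0 (Om : set Pt) (P : Pt -> Prop) : ae_on Om P -> (0 < d)%N.
Proof.
move=> null; rewrite lt0n; apply/negP => /eqP d0.
by have := leb_outer_dim0 [set x | Om x /\ ~ P x] d0; rewrite null lee_fin ler10.
Qed.

Lemma ess_inf_on_gt0P (Om : set Pt) (g : Pt -> \bar R) : 0 < ess_inf_on Om g <->
  exists2 delta : R, (0 < delta)%R & ae_on Om (fun x => delta%:E <= g x).
Proof.
split=> [/ereal_sup_gt[_ [delta ae_delta <-]]|[delta delta_gt0 ae_delta]].
  by rewrite lte_fin; exists delta.
apply: (@lt_le_trans _ _ delta%:E); first by rewrite lte_fin.
by apply: ereal_sup_ubound; exists delta.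
Qed.

End leb_outer.

(* ['rV_d] with every set measurable, so that [mu_ext] applies to [box_content]. *)
Definition discrete_rV (R : realType) (d : nat) := 'rV[R]_d.
HB.instance Definition _ (R : realType) (d : nat) := Pointed.on (discrete_rV R d).
HB.instance Definition _ (R : realType) (d : nat) :=
  @isMeasurable.Build default_measure_display (discrete_rV R d) discrete_measurable
    discrete_measurable0 discrete_measurableC discrete_measurableU.

Section box_content.
Variables (R : realType) (d : nat).
Hypothesis d_gt0 : (0 < d)%N.
Local Notation Pt := 'rV[R]_d.
Local Open Scope ereal_scope.
Implicit Types (E F : set Pt) (a b : Pt).

(* The empty set counts as the degenerate box [box 0 0]; a set that is not a box gets [+oo]. *)
Definition box_content F : \bar R := ereal_inf [set s | exists a b,
  [/\ box_le a b, F = set0 \/ F = box a b & s = (box_vol a b)%:E]].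

Lemma box_corners a b : box_le a b -> box a b a /\ box a b b.
Proof. by move=> ab; split => i; rewrite ab lexx. Qed.

Lemma box_vol0 : box_vol (0 : Pt) 0 = 0%R.
Proof. by rewrite /box_vol (bigD1 (Ordinal d_gt0)) //= mxE subrr mul0r. Qed.

Lemma box_vol_eq a b a' b' : box_le a b -> box_le a' b' ->
  box a b = box a' b' -> box_vol a b = box_vol a' b'.
Proof.
move=> ab ab' e; apply: eq_bigr => i _.
have [/(_ i)/andP[a'a _] /(_ i)/andP[_ bb']] : box a' b' a /\ box a' b' b.
  by rewrite -e; exact: box_corners.
have [/(_ i)/andP[aa' _] /(_ i)/andP[_ b'b]] : box a b a' /\ box a b b'.
  by rewrite e; exact: box_corners.
have -> : (a 0 i = a' 0 i)%R by apply/le_anti; rewrite aa' a'a.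
by have -> : (b 0 i = b' 0 i)%R by apply/le_anti; rewrite bb' b'b.
Qed.

Lemma box_content_ge0 F : 0 <= box_content F.
Proof.
by apply: le_ereal_inf_tmp => _ [a [b [ab _ ->]]]; rewrite lee_fin box_vol_ge0.
Qed.

Lemma box_content0 : box_content set0 = 0.
Proof.
apply/eqP; rewrite eq_le box_content_ge0 andbT.
by apply: ereal_inf_lbound; exists 0%R, 0%R; rewrite box_vol0; split => //; left.
Qed.

Lemma box_content_box a b : box_le a b -> box_content (box a b) = (box_vol a b)%:E.
Proof.
move=> ab; apply/eqP; rewrite eq_le; apply/andP; split.
  by apply: ereal_inf_lbound; exists a, b; split => //; right.
apply: le_ereal_inf_tmp => _ [a' [b' [ab' [box0|e] ->]]].
  by have [+ _] := box_corners ab; rewrite box0.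
by rewrite (box_vol_eq ab ab' e).
Qed.

Lemma box_content_cover F : box_content F < +oo ->
  exists a b, [/\ box_le a b, F `<=` box a b & (box_vol a b)%:E <= box_content F].
Proof.
have [-> _|F0] := pselect (F = set0).
  by exists 0%R, 0%R; rewrite box_content0 box_vol0; split => // i; rewrite mxE.
move=> /ereal_inf_lt[_ [a [b [ab [/F0[]|Fab] _]]] _].
by exists a, b; rewrite Fab box_content_box //; split.
Qed.

Lemma leb_outer_mu_ext :
  @leb_outer R d = mu_ext (box_content : set (discrete_rV R d) -> \bar R).
Proof.
apply/funext => E; apply/eqP; rewrite eq_le; apply/andP; split; last first.
  apply: le_ereal_inf_tmp => _ [a [b [ab Eab ->]]].
  apply: ereal_inf_lbound; exists (fun k => box (a k) (b k)) => //.
  by apply: eq_eseriesr => k _; rewrite box_content_box.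
apply: le_ereal_inf_tmp => _ [F [_ EF] <-].
have [[k Fk]|/forallNP Ffin] := pselect (exists k, box_content (F k) = +oo).
  by rewrite (nneseries_pinfty _ _ Fk) ?leey // => n _; exact: box_content_ge0.
have /choice[ab abP] k : exists ab : Pt * Pt, [/\ box_le ab.1 ab.2,
    F k `<=` box ab.1 ab.2 & (box_vol ab.1 ab.2)%:E <= box_content (F k)].
  have [|a [b abk]] := @box_content_cover (F k); first by rewrite ltey; exact/eqP/Ffin.
  by exists (a, b).
apply: (@le_trans _ _ (\sum_(k <oo) (box_vol (ab k).1 (ab k).2)%:E)).
  apply: ereal_inf_lbound; exists (fun k => (ab k).1), (fun k => (ab k).2).
  split => [k|x /EF[k _ Fkx]|//]; first by case: (abP k).
  by exists k => //; case: (abP k) => _ /(_ x Fkx).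
apply: lee_nneseries => k _; last by case: (abP k).
by rewrite lee_fin box_vol_ge0 //; case: (abP k).
Qed.

End box_content.

(* The proof of [0 < d] is a phantom argument: only then is [leb_outer] an outer measure. *)
Definition lebesgue_outer (R : realType) (d : nat) (_ : (0 < d)%N) :
  set 'rV[R]_d -> \bar R := @leb_outer R d.

Section lebesgue_outer_measure.
Variables (R : realType) (d : nat).
Hypothesis d_gt0 : (0 < d)%N.
Local Notation Pt := 'rV[R]_d.

Lemma leb_outer0 : @leb_outer R d set0 = 0%E.
Proof. by rewrite leb_outer_mu_ext // mu_ext0 // ?box_content0 //; exact: box_content_ge0. Qed.

Lemma leb_outer_sigma_subadditive : sigma_subadditive (@leb_outer R d).
Proof.
rewrite leb_outer_mu_ext //.
exact: (@mu_ext_sigma_subadditive _ (discrete_rV R d) _ _ (@box_content_ge0 R d)).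
Qed.

HB.instance Definition _ := isOuterMeasure.Build R Pt (lebesgue_outer d_gt0)
  leb_outer0 (@leb_outer_ge0 R d) (@leb_outer_mono R d) leb_outer_sigma_subadditive.

End lebesgue_outer_measure.

Lemma ae_on_and (R : realType) (d : nat) (Om : set 'rV[R]_d) (P Q : 'rV[R]_d -> Prop) :
  ae_on Om P -> ae_on Om Q -> ae_on Om (fun x => P x /\ Q x).
Proof.
move=> aeP aeQ; have d_gt0 := ae_on_dim_gt0 aeP.
apply/eqP; rewrite eq_le leb_outer_ge0 andbT.
apply: (@le_trans _ _ (leb_outer ([set x | Om x /\ ~ P x] `|` [set x | Om x /\ ~ Q x]))).
  by apply: leb_outer_mono => x [Ox /not_andP[nPx|nQx]]; [left|right].
apply: le_trans (outer_measureU2 (lebesgue_outer d_gt0) _ _) _.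
by rewrite /= /lebesgue_outer aeP aeQ adde0.
Qed.

Section caratheodory.
Variables (R : realType) (d : nat).
Hypothesis d_gt0 : (0 < d)%N.
Local Notation U := (caratheodory_type (@lebesgue_outer R d d_gt0)).

(* Measurability in [U] is Caratheodory measurability for [leb_outer], which is
   [leb_measurable] by definition. *)
Lemma meas_on_measurable_fun (Om : set U) (f : U -> R) :
  meas_on Om f -> measurable Om /\ measurable_fun Om f.
Proof.
move=> mf; have mOm : measurable Om.
  rewrite (_ : Om = \bigcup_n (Om `&` [set x | - n%:R < f x])).
    by apply: bigcupT_measurable => n; exact: mf.
  apply/seteqP; split => [x Ox|x [n _ []//]].
  exists (Num.bound `|f x|) => //; split => //=; rewrite ltrNl.
  by apply: le_lt_trans (archi_boundP (normr_ge0 (f x))); rewrite -normrN ler_norm.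
split => //; apply: (measurability _ (measurable_realfun.RGenOInfty.measurableE R)) => //.
by move=> _ [_ [t ->] <-]; rewrite preimage_itvoy; exact: mf.
Qed.

Lemma meas_on_opp (Om : set 'rV[R]_d) (f : 'rV[R]_d -> R) :
  meas_on Om f -> meas_on Om (fun x => - f x).
Proof.
move=> /meas_on_measurable_fun[mOm /measurable_realfun.measurable_funN mNf] t.
by rewrite -preimage_itvoy; exact: mNf.
Qed.

End caratheodory.

Section complex_vectors.
Variables (R : realType) (d : nat).
Local Notation C := R[i].
Local Notation cvec := 'cV[C]_d.
Implicit Types (u v w : cvec) (M : 'M[C]_d) (s : R).

Lemma Re_mulJ (z y : C) :
  complex.Re (z * conjc y) = complex.Re z * complex.Re y + complex.Im z * complex.Im y.
Proof. by case: z => a b; case: y => a' b' /=; ring. Qed.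

Lemma normc_conj (z : C) : Normc.normc (conjc z) = Normc.normc z.
Proof. by case: z => a b /=; rewrite sqrrN. Qed.

Definition dotRe w u := \sum_j complex.Re (w j 0) * complex.Re (u j 0).
Definition dotIm w u := \sum_j complex.Im (w j 0) * complex.Im (u j 0).

Lemma Re_cip w u : complex.Re (cip w u) = dotRe w u + dotIm w u.
Proof. by rewrite /cip raddf_sum -big_split; apply: eq_bigr => j _; exact: Re_mulJ. Qed.

Lemma cnorm_ge0 u : 0 <= cnorm u.
Proof. exact: sqrtr_ge0. Qed.

Lemma cnorm_sqr u : cnorm u ^+ 2 = dotRe u u + dotIm u u.
Proof.
rewrite /cnorm sqr_sqrtr; last by apply: sumr_ge0 => j _; rewrite sqr_ge0.
rewrite -big_split; apply: eq_bigr => j _; case: (u j 0) => a b /=.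
by rewrite sqr_sqrtr ?addr_ge0 ?sqr_ge0 // !expr2.
Qed.

Lemma cnormE u : cnorm u = Num.sqrt (dotRe u u + dotIm u u).
Proof. by rewrite -cnorm_sqr sqrtr_sqr ger0_norm // cnorm_ge0. Qed.

Lemma cnormN u : cnorm (- u) = cnorm u.
Proof.
by congr Num.sqrt; apply: eq_bigr => j _; rewrite mxE; case: (u j 0) => a b /=; rewrite !sqrrN.
Qed.

Lemma cnorm_eq0 u : cnorm u = 0 -> u = 0.
Proof.
move=> /eqP; rewrite sqrtr_eq0 => sum_le0; apply/matrixP => j k; rewrite ord1 mxE.
have sq_ge0 i : true -> 0 <= Normc.normc (u i 0) ^+ 2 by rewrite sqr_ge0.
have sum0 : \sum_i Normc.normc (u i 0) ^+ 2 = 0 by apply/le_anti; rewrite sum_le0 sumr_ge0.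
by have /eqP := psumr_eq0P sq_ge0 sum0 (i := j) isT; rewrite sqrf_eq0 => /eqP/Normc.eq0_normc.
Qed.

Lemma dotReC w u : dotRe w u = dotRe u w.
Proof. by apply: eq_bigr => j _; rewrite mulrC. Qed.

Lemma dotImC w u : dotIm w u = dotIm u w.
Proof. by apply: eq_bigr => j _; rewrite mulrC. Qed.

Lemma dotRe_ge0 u : 0 <= dotRe u u.
Proof. by apply: sumr_ge0 => j _; rewrite -expr2 sqr_ge0. Qed.

Lemma dotIm_ge0 u : 0 <= dotIm u u.
Proof. by apply: sumr_ge0 => j _; rewrite -expr2 sqr_ge0. Qed.

Lemma Re_cipC w u : complex.Re (cip w u) = complex.Re (cip u w).
Proof. by rewrite !Re_cip dotReC dotImC. Qed.

Lemma cipC w u : cip u w = conjc (cip w u).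
Proof.
by rewrite /cip rmorph_sum; apply: eq_bigr => j _; rewrite rmorphM /= conjcK mulrC.
Qed.

Lemma Re_cipDl v w u :
  complex.Re (cip (v + w) u) = complex.Re (cip v u) + complex.Re (cip w u).
Proof.
have -> : cip (v + w) u = cip v u + cip w u.
  by rewrite /cip -big_split; apply: eq_bigr => j _; rewrite mxE mulrDl.
exact: raddfD.
Qed.

Lemma cip0l u : cip 0 u = 0.
Proof. by apply: big1 => j _; rewrite mxE mul0r. Qed.

Lemma cip_adjoint M v u : cip (M *m v) u = cip v (adjoint M *m u).
Proof.
rewrite /cip; under eq_bigr do rewrite mxE mulr_suml.
rewrite exchange_big; apply: eq_bigr => k _.
rewrite mxE rmorph_sum mulr_sumr; apply: eq_bigr => j _.
by rewrite !mxE rmorphM /= conjcK mulrA [v k 0 * _]mulrC.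
Qed.

Lemma adjointK : involutive (@adjoint R d).
Proof. by move=> M; apply/matrixP => i j; rewrite !mxE conjcK. Qed.

Lemma Re_Js s u j : s != 0 -> complex.Re (Js s u j 0) = (s - 1) * complex.Re (u j 0).
Proof. by rewrite !mxE; case: (u j 0) => a b s0 /=; field. Qed.

Lemma Im_Js s u j : s != 0 -> complex.Im (Js s u j 0) = complex.Im (u j 0).
Proof. by rewrite !mxE; case: (u j 0) => a b s0 /=; field. Qed.

Lemma Js0 s : Js s 0 = 0 :> cvec.
Proof. by rewrite /Js /cconj map_mx0 !(scaler0, addr0). Qed.

Lemma Re_cip_Jsr s w u : s != 0 ->
  complex.Re (cip w (Js s u)) = (s - 1) * dotRe w u + dotIm w u.
Proof.
move=> s0; rewrite Re_cip /dotRe /dotIm mulr_sumr.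
by congr (_ + _); apply: eq_bigr => j _; rewrite (Re_Js, Im_Js) // mulrCA.
Qed.

Lemma Re_cip_Jsl s w u : s != 0 ->
  complex.Re (cip (Js s w) u) = (s - 1) * dotRe w u + dotIm w u.
Proof. by move=> s0; rewrite Re_cipC Re_cip_Jsr // dotReC dotImC. Qed.

Lemma cnorm_Js s u : s != 0 ->
  Num.min ((s - 1) ^+ 2) 1 * cnorm u ^+ 2 <= cnorm (Js s u) ^+ 2.
Proof.
move=> s0; rewrite !cnorm_sqr mulrDr.
have -> : dotRe (Js s u) (Js s u) = (s - 1) ^+ 2 * dotRe u u.
  by rewrite /dotRe mulr_sumr; apply: eq_bigr => j _; rewrite Re_Js //; ring.
have -> : dotIm (Js s u) (Js s u) = 1 * dotIm u u.
  by rewrite mul1r; apply: eq_bigr => j _; rewrite !Im_Js.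
by apply: lerD; apply: ler_wpM2r; rewrite ?dotRe_ge0 ?dotIm_ge0 ?ge_min ?lexx ?orbT.
Qed.

Lemma Js_inv p q u : p != 0 -> q != 0 -> (p - 1) * (q - 1) = 1 -> Js p (Js q u) = u.
Proof.
move=> p0 q0 pq; apply/matrixP => j k; rewrite ord1.
apply/eqP; rewrite eq_complex; apply/andP; split; apply/eqP.
  by rewrite Re_Js // Re_Js // mulrA pq mul1r.
by rewrite Im_Js // Im_Js.
Qed.

Lemma Re_cip_Js_sym s w u : s != 0 ->
  complex.Re (cip (Js s w) u) = complex.Re (cip w (Js s u)).
Proof. by move=> s0; rewrite Re_cip_Jsl // Re_cip_Jsr. Qed.

Lemma Re_cip_adjoint_Js p q M u : p != 0 -> q != 0 -> (p - 1) * (q - 1) = 1 ->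
  complex.Re (cip (M *m Js q u) (Js p (Js q u))) = complex.Re (cip (adjoint M *m u) (Js q u)).
Proof. by move=> p0 q0 pq; rewrite Js_inv // cip_adjoint Re_cipC. Qed.

Lemma Re_cip_swap_Js p q b c u : p != 0 -> q != 0 -> (p - 1) * (q - 1) = 1 ->
  complex.Re (cip (b + Js p c) (Js q u)) = complex.Re (cip (c + Js q b) u).
Proof.
move=> p0 q0 pq; rewrite [LHS]Re_cipDl [RHS]Re_cipDl (Re_cip_Js_sym _ _ p0) Js_inv //.
by rewrite -(Re_cip_Js_sym _ _ q0) addrC.
Qed.

Lemma Re_cipDJs s b c u : s != 0 ->
  complex.Re (cip (b + Js s c) u) = complex.Re (cip b u) + ((s - 1) * dotRe c u + dotIm c u).
Proof. by move=> s0; rewrite Re_cipDl Re_cip_Jsl. Qed.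

End complex_vectors.

Section Delta_form.
Variables (R : realType) (d : nat).
Local Notation C := R[i].
Local Notation cvec := 'cV[C]_d.
Implicit Types (u v w : cvec) (M : 'M[C]_d) (s a : R).

Definition Delta_form s M u :=
  complex.Re (cip (M *m u) (u + (`|1 - 2 / s|)%:C%C *: cconj u)).

Lemma Re_cip_Delta (k : R) w u :
  complex.Re (cip w (u + k%:C%C *: cconj u)) = (1 + k) * dotRe w u + (1 - k) * dotIm w u.
Proof.
rewrite Re_cip /dotRe /dotIm !mulr_sumr.
by congr (_ + _); apply: eq_bigr => j _; rewrite !mxE; case: (u j 0) => a b /=; ring.
Qed.

Lemma dotRe_rotate w u : dotRe ('i%C *: w) ('i%C *: u) = dotIm w u.
Proof. by apply: eq_bigr => j _; rewrite !mxE; case: (w j 0); case: (u j 0) => /= *; ring. Qed.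

Lemma dotIm_rotate w u : dotIm ('i%C *: w) ('i%C *: u) = dotRe w u.
Proof. by apply: eq_bigr => j _; rewrite !mxE; case: (w j 0); case: (u j 0) => /= *; ring. Qed.

Lemma dotRe_scale a w u : dotRe (a%:C%C *: w) (a%:C%C *: u) = a ^+ 2 * dotRe w u.
Proof.
rewrite /dotRe mulr_sumr; apply: eq_bigr => j _; rewrite !mxE.
by case: (w j 0); case: (u j 0) => /= *; ring.
Qed.

Lemma dotIm_scale a w u : dotIm (a%:C%C *: w) (a%:C%C *: u) = a ^+ 2 * dotIm w u.
Proof.
rewrite /dotIm mulr_sumr; apply: eq_bigr => j _; rewrite !mxE.
by case: (w j 0); case: (u j 0) => /= *; ring.
Qed.

Lemma cnorm_rotate u : cnorm ('i%C *: u) = cnorm u.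
Proof. by rewrite !cnormE dotRe_rotate dotIm_rotate addrC. Qed.

Lemma cnorm_scale a u : cnorm (a%:C%C *: u) = `|a| * cnorm u.
Proof. by rewrite !cnormE dotRe_scale dotIm_scale -mulrDr sqrtrM ?sqr_ge0 // sqrtr_sqr. Qed.

Lemma Delta_form_scale s M a u : Delta_form s M (a%:C%C *: u) = a ^+ 2 * Delta_form s M u.
Proof. by rewrite /Delta_form !Re_cip_Delta -scalemxAr dotRe_scale dotIm_scale; ring. Qed.

(* Up to the factor [s / 2], the quadratic forms of [Delta_s] and [J_s] agree,
   after replacing [xi] by [i xi] when [s < 2]. *)
Lemma Re_cip_Js_rotate s M u : 0 < s -> exists v, cnorm v = cnorm u /\
  complex.Re (cip (M *m u) (Js s u)) = s / 2 * Delta_form s M v.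
Proof.
move=> s_gt0; have s0 : s != 0 by rewrite gt_eqF.
rewrite Re_cip_Jsr //; have [k_ge0|k_lt0] := leP 0 (1 - 2 / s).
  by exists u; split => //; rewrite /Delta_form Re_cip_Delta ger0_norm //; field.
exists ('i%C *: u); split; first exact: cnorm_rotate.
by rewrite /Delta_form Re_cip_Delta -scalemxAr dotRe_rotate dotIm_rotate ltr0_norm //; field.
Qed.

Lemma Delta_form_rotate s M u : 0 < s -> exists v, cnorm v = cnorm u /\
  Delta_form s M u = 2 / s * complex.Re (cip (M *m v) (Js s v)).
Proof.
move=> s_gt0; have s0 : s != 0 by rewrite gt_eqF.
rewrite /Delta_form Re_cip_Delta; have [k_ge0|k_lt0] := leP 0 (1 - 2 / s).
  by exists u; split => //; rewrite Re_cip_Jsr // ger0_norm //; field.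
exists ('i%C *: u); split; first exact: cnorm_rotate.
by rewrite Re_cip_Jsr // -scalemxAr dotRe_rotate dotIm_rotate ltr0_norm //; field.
Qed.

Lemma Delta_form_coercive s M delta : 0 < s ->
  (forall xi, cnorm xi = 1 -> delta <= Delta_form s M xi) ->
  forall u, s / 2 * delta * cnorm u ^+ 2 <= complex.Re (cip (M *m u) (Js s u)).
Proof.
move=> s_gt0 unit_ge u; have [v [vu ->]] := Re_cip_Js_rotate M u s_gt0.
rewrite -vu -mulrA; apply: ler_wpM2l; first by rewrite divr_ge0 // ltW.
have [v0|v_neq0] := eqVneq (cnorm v) 0.
  by rewrite v0 expr0n /= mulr0 (cnorm_eq0 v0) /Delta_form mulmx0 cip0l.
have n_gt0 : 0 < cnorm v ^+ 2 by rewrite exprn_gt0 // lt_neqAle eq_sym v_neq0 cnorm_ge0.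
have := unit_ge ((cnorm v)^-1%:C%C *: v).
rewrite cnorm_scale ger0_norm ?invr_ge0 ?cnorm_ge0 // mulVf // => /(_ erefl).
by rewrite Delta_form_scale exprVn mulrC ler_pdivlMr.
Qed.

Lemma coercive_Delta_form s M delta : 0 < s ->
  (forall u, delta * cnorm u ^+ 2 <= complex.Re (cip (M *m u) (Js s u))) ->
  forall xi, cnorm xi = 1 -> 2 / s * delta <= Delta_form s M xi.
Proof.
move=> s_gt0 coer xi xi1; have [v [vxi ->]] := Delta_form_rotate M xi s_gt0.
apply: ler_wpM2l; first by rewrite divr_ge0 // ltW.
by have := coer v; rewrite vxi xi1 expr1n mulr1.
Qed.

End Delta_form.

Section conjugate_exponent.
Variable R : realFieldType.
Implicit Types p : R.

Definition conj_exp p := p / (p - 1).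

Lemma conj_exp_holder p : 1 < p -> (p - 1) * (conj_exp p - 1) = 1.
Proof. by move=> p_gt1; rewrite /conj_exp; field; rewrite subr_eq0 gt_eqF. Qed.

Lemma conj_exp_gt1 p : 1 < p -> 1 < conj_exp p.
Proof.
move=> p_gt1; have p1_gt0 : 0 < p - 1 by rewrite subr_gt0.
by rewrite /conj_exp ltr_pdivlMr // mul1r ltrBlDr ltrDl.
Qed.

Lemma conj_expK p : 1 < p -> conj_exp (conj_exp p) = p.
Proof.
move=> p_gt1; have p1_neq0 : p - 1 != 0 by rewrite subr_eq0 gt_eqF.
rewrite /conj_exp; field.
by rewrite p1_neq0 mulN1r opprB addrC subrK oner_eq0.
Qed.

Lemma conj_exp_le2 p : 2 <= p -> conj_exp p <= 2.
Proof.
move=> p_ge2; have p1_gt0 : 0 < p - 1 by rewrite subr_gt0 (lt_le_trans _ p_ge2) ?ltr1n.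
by rewrite /conj_exp ler_pdivrMr // (_ : 2 * (p - 1) = p + (p - 2)) ?lerDl ?subr_ge0 //; ring.
Qed.

Lemma le_conj_exp p1 p2 : 1 < p1 -> p1 <= p2 -> conj_exp p2 <= conj_exp p1.
Proof.
move=> p1_gt1 p12; have p2_gt1 := lt_le_trans p1_gt1 p12.
rewrite /conj_exp ler_pdivrMr ?subr_gt0 // mulrAC ler_pdivlMr ?subr_gt0 //.
by rewrite !mulrBr !mulr1 [p2 * p1]mulrC lerD2l lerN2.
Qed.

End conjugate_exponent.

Section coercivity.
Variables (R : realType) (d : nat).
Local Notation C := R[i].
Local Notation cvec := 'cV[C]_d.
Local Notation Pt := 'rV[R]_d.
Implicit Types (s p q r mu : R) (Om : set Pt) (A : Pt -> 'M[C]_d) (b c : Pt -> cvec) (V : Pt -> R).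

Definition coercive s Om A b c V := exists mu, 0 < mu /\ ae_on Om (fun x =>
  forall xi, mu * (cnorm xi ^+ 2 + V x) <= Gamma s A b c V x xi).

Lemma Gamma0 s A x u :
  Gamma s A (fun=> 0) (fun=> 0) (fun=> 0) x u = complex.Re (cip (A x *m u) (Js s u)).
Proof. by rewrite /Gamma /= addr0 Js0 (addr0 (0 : 'cV_d)) cip0l addr0. Qed.

Lemma Gamma_affine A b c V x u :
  exists a0 a1, forall s, s != 0 -> Gamma s A b c V x u = (s - 1) * a1 + a0.
Proof.
exists (dotIm (A x *m u) u + complex.Re (cip (b x) u) + dotIm (c x) u + V x).
exists (dotRe (A x *m u) u + dotRe (c x) u) => s s0.
by rewrite /Gamma Re_cipDJs // Re_cip_Jsr //; ring.
Qed.

Lemma Gamma_Js_adjoint p q A b c V x u :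
  p != 0 -> q != 0 -> (p - 1) * (q - 1) = 1 ->
  Gamma p A b c V x (Js q u) = Gamma q (fun y => adjoint (A y)) c b V x u.
Proof.
move=> p0 q0 pq; apply: (f_equal2 (fun y z => y + z + V x)).
  exact: Re_cip_adjoint_Js.
exact: Re_cip_swap_Js.
Qed.

Lemma Delta_gt0P s Om A : 0 < s ->
  (0 < Delta s Om A)%E <-> coercive s Om A (fun=> 0) (fun=> 0) (fun=> 0).
Proof.
move=> s_gt0; rewrite /Delta ess_inf_on_gt0P.
split=> [[delta delta_gt0 ae_delta]|[mu [mu_gt0 ae_mu]]].
  exists (s / 2 * delta); split; first by rewrite !mulr_gt0.
  apply: ae_on_mono ae_delta => x _ inf_ge u; rewrite Gamma0 addr0.
  apply: Delta_form_coercive => // xi xi1; rewrite -lee_fin (le_trans inf_ge) //.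
  by apply: ereal_inf_lbound; exists xi.
exists (2 / s * mu); first by rewrite !mulr_gt0 // invr_gt0.
apply: ae_on_mono ae_mu => x _ coer; apply: le_ereal_inf_tmp => _ [xi /= xi1 <-].
rewrite lee_fin; apply: coercive_Delta_form => // u.
by have := coer u; rewrite Gamma0 addr0.
Qed.

Lemma le_affine_interp (a b L r s p : R) : r <= s <= p ->
  L <= (r - 1) * a + b -> L <= (p - 1) * a + b -> L <= (s - 1) * a + b.
Proof.
move=> /andP[rs sp] Lr Lp; have [a_ge0|a_lt0] := leP 0 a.
  apply: le_trans Lr _; rewrite lerD2r; apply: ler_wpM2r => //; by rewrite lerD2r.
apply: le_trans Lp _; rewrite lerD2r; apply: ler_wnM2r; first exact: ltW.
by rewrite lerD2r.
Qed.

Lemma coercive_interp r s p Om A b c V : 0 < r -> r <= s <= p ->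
  (forall x, Om x -> 0 <= V x) ->
  coercive r Om A b c V -> coercive p Om A b c V -> coercive s Om A b c V.
Proof.
move=> r_gt0 rsp V_ge0 [mur [mur_gt0 ae_r]] [mup [mup_gt0 ae_p]].
have /andP[rs sp] := rsp.
have [r0 s0 p0] : [/\ r != 0, s != 0 & p != 0].
  by rewrite !gt_eqF // (lt_le_trans r_gt0) // (le_trans rs).
exists (Num.min mur mup); split; first by rewrite lt_min mur_gt0.
apply: ae_on_mono (ae_on_and ae_r ae_p) => x Ox [Gr Gp] u.
have N_ge0 : 0 <= cnorm u ^+ 2 + V x by rewrite addr_ge0 ?sqr_ge0 ?V_ge0.
have [a0 [a1 Gamma_a]] := Gamma_affine A b c V x u.
have [min_le_r min_le_p] : Num.min mur mup <= mur /\ Num.min mur mup <= mup.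
  by rewrite !ge_min !lexx orbT.
move: (Gr u) (Gp u); rewrite !Gamma_a // => Lr Lp.
by apply: le_affine_interp rsp (le_trans _ Lr) (le_trans _ Lp); exact: ler_wpM2r.
Qed.

Lemma coercive_adjoint p q Om A b c V :
  p != 0 -> q != 0 -> (p - 1) * (q - 1) = 1 -> (forall x, Om x -> 0 <= V x) ->
  coercive p Om A b c V -> coercive q Om (fun x => adjoint (A x)) c b V.
Proof.
move=> p0 q0 pq V_ge0 [mu [mu_gt0 ae_mu]].
have q1 : q - 1 != 0 by apply: contra_eq_neq pq => ->; rewrite mulr0 eq_sym oner_neq0.
have m_gt0 : 0 < Num.min ((q - 1) ^+ 2) 1.
  by rewrite lt_min ltr01 andbT lt_neqAle eq_sym sqrf_eq0 q1 sqr_ge0.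
exists (mu * Num.min ((q - 1) ^+ 2) 1); split; first by rewrite mulr_gt0.
apply: ae_on_mono ae_mu => x Ox Gp u; rewrite -(Gamma_Js_adjoint A b c V x u p0 q0 pq).
apply: le_trans (Gp (Js q u)); rewrite -mulrA; apply: ler_wpM2l; first exact: ltW.
by rewrite mulrDr lerD ?cnorm_Js // ler_piMl ?V_ge0 // ge_min lexx orbT.
Qed.

End coercivity.

Section S_class.
Variables (R : realType) (d : nat).
Local Notation C := R[i].
Local Notation Pt := 'rV[R]_d.
Implicit Types (s p q r : R) (Om : set Pt) (A : Pt -> 'M[C]_d).

Lemma ellA_adjoint Om A : ellA Om A -> ellA Om (fun x => adjoint (A x)).
Proof.
case=> mA [lam [Lam [lam_gt0 Lam_gt0 bounds]]]; split.
  move=> i j; have [mRe mIm] := mA j i; split.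
    rewrite (_ : (fun x => _) = fun x => complex.Re (A x j i)) //.
    by apply/funext => x; rewrite !mxE; case: (A x j i).
  rewrite (_ : (fun x => _) = fun x => - complex.Im (A x j i)); last first.
    by apply/funext => x; rewrite !mxE; case: (A x j i).
  exact: (meas_on_opp (ae_on_dim_gt0 bounds)).
exists lam, Lam; split; [exact: lam_gt0|exact: Lam_gt0|].
apply: ae_on_mono bounds => x _ Ax xi sigma.
have [coer _] := Ax xi xi; have [_ bnd] := Ax sigma xi.
rewrite !cip_adjoint adjointK; split; first by rewrite Re_cipC.
by rewrite cipC normc_conj mulrAC.
Qed.

Lemma S_class_adjoint p Om A b c V : 1 < p ->
  S_class p Om (A, b, c, V) ->
  S_class (conj_exp p) Om ((fun x => adjoint (A x)), c, b, V).
Proof.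
move=> p_gt1 [[eA [Lb [Lc LV]]] [_ DeltaA] [M [M_gt0 bcM]] coerA].
have [p0 q0] : p != 0 /\ conj_exp p != 0.
  by rewrite !gt_eqF // (lt_trans ltr01) // conj_exp_gt1.
have pq := conj_exp_holder p_gt1.
have eA' := ellA_adjoint eA.
have q_gt0 : 0 < conj_exp p by rewrite (lt_trans ltr01) // conj_exp_gt1.
split.
- exact: (conj eA' (conj Lc (conj Lb LV))).
- split; first exact: eA'.
  apply/(Delta_gt0P Om _ q_gt0).
  apply: coercive_adjoint p0 q0 pq (fun _ _ => lexx 0) _.
  exact: (Delta_gt0P Om A (lt_trans ltr01 p_gt1)).1 DeltaA.
- exists M; split; first exact: M_gt0.
  by apply: ae_on_mono bcM => x _; rewrite -opprB cnormN.
- exact: coercive_adjoint p0 q0 pq LV.1 coerA.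
Qed.

Lemma S_class_interp r s p Om : 0 < r -> r <= s <= p ->
  S_class r Om `&` S_class p Om `<=` S_class s Om.
Proof.
move=> r_gt0 rsp [[[A b] c] V] [[hyps [eA Dr] bound coer_r] [_ [_ Dp] _ coer_p]].
have s_gt0 : 0 < s by case/andP: rsp => rs _; exact: lt_le_trans rs.
have p_gt0 : 0 < p by case/andP: rsp => rs sp; exact: lt_le_trans (le_trans rs sp).
have V_ge0 := hyps.2.2.2.1.
split; [exact: hyps| |exact: bound|exact: coercive_interp r_gt0 rsp V_ge0 coer_r coer_p].
split; first exact: eA.
apply/(Delta_gt0P Om A s_gt0).
apply: (coercive_interp r_gt0 rsp (fun _ _ => lexx 0)).
  exact: (Delta_gt0P Om A r_gt0).1 Dr.
exact: (Delta_gt0P Om A p_gt0).1 Dp.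
Qed.

Lemma B_class_antitone Om p1 p2 : 2 <= p1 -> p1 <= p2 ->
  B_class p2 Om `<=` B_class p1 Om.
Proof.
move=> p1_ge2 p12 Q [Qp2 Qq2].
have p1_gt1 : 1 < p1 by rewrite (lt_le_trans _ p1_ge2) ?ltr1n.
have q2_gt0 : 0 < conj_exp p2.
  by rewrite (lt_trans ltr01) // conj_exp_gt1 // (lt_le_trans p1_gt1).
have q2_le2 : conj_exp p2 <= 2 by rewrite conj_exp_le2 // (le_trans p1_ge2).
have q1_le2 : conj_exp p1 <= 2 by rewrite conj_exp_le2.
have interp s : conj_exp p2 <= s <= p2 -> S_class s Om Q.
  by move=> rsp; exact: S_class_interp q2_gt0 rsp Q (conj Qq2 Qp2).
split; apply: interp; apply/andP; split => //.
- exact: le_trans q2_le2 p1_ge2.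
- exact: le_conj_exp.
- by rewrite (le_trans q1_le2) // (le_trans p1_ge2).
Qed.

End S_class.

Unset Implicit Arguments. Set Strict Implicit.
Theorem proposition3p2 (R : realType) (d : nat) (Omega : set 'rV[R]_d)
    (A : 'rV[R]_d -> 'M[R[i]]_d) (b c : 'rV[R]_d -> 'cV[R[i]]_d)
    (V : 'rV[R]_d -> R) (r p : R) :
  open Omega -> Omega !=set0 ->
  ellA Omega A -> Linf Omega b -> Linf Omega c -> L1loc_nonneg Omega V ->
  1 < r -> r < p ->
  let q := p / (p - 1) in
  (S_class p Omega (A, b, c, V) <->
     S_class q Omega ((fun x => adjoint (A x)), c, b, V)) /\
  (forall s : R, r <= s <= p ->
     S_class r Omega `&` S_class p Omega `<=` S_class s Omega) /\
  (forall p1 p2 : R, 2 <= p1 -> p1 <= p2 ->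
     B_class p2 Omega `<=` B_class p1 Omega).
Proof.
move=> _ _ _ _ _ _ r_gt1 r_lt_p q; rewrite {}/q -/(conj_exp p).
have p_gt1 : 1 < p := lt_trans r_gt1 r_lt_p.
split; [|split]; last exact: B_class_antitone.
  split; first exact: S_class_adjoint.
  move=> /(S_class_adjoint (conj_exp_gt1 p_gt1)); rewrite (conj_expK p_gt1).
  by under [fun x => _]funext do rewrite adjointK.
by move=> s rsp; apply: S_class_interp rsp; exact: lt_trans r_gt1.
Qed.
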